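(* In generalized non-signalling theory (box world), let $A_1,A_2,B_1,\ldots,B_n$ be a composite system of boxes in which the boxes $B_1,\ldots,B_n$ are classical (each has exactly one possible input), while $A_1$ and $A_2$ may be non-classical. Then every measurement on this system is either a basic measurement or a probabilistic mixture of basic measurements.
   Context: Box world (GNST): a box is a system with a finite set of inputs (fiducial measurements) $x$ and a finite set of outputs $a$. A system of $n$ boxes has states $\mathbf{p}$ given by all collections of numbers $p(\mathbf{a}|\mathbf{x})=p(a_1,\ldots,a_n|x_1,\ldots,x_n)\ge 0$ (one for each tuple of outputs $\mathbf{a}$ and tuple of inputs $\mathbf{x}$) satisfying normalization $\sum_{\mathbf{a}}p(\mathbf{a}|\mathbf{x})=1$ for all $\mathbf{x}$ and the no-signalling conditions: for each $i$, $\sum_{a_i}p(a_1,\ldots,a_n|x_1,\ldots,x_i,\ldots,x_n)$ does not depend on $x_i$. Reduced states are obtained by summing out outputs. An effect is any linear map $\mu$ from the set of states to $[0,1]$; a vector $\mathbf{R}$ (indexed by pairs $(\mathbf{a},\mathbf{x})$) represents $\mu$ if $\mu(\mathbf{p})=\sum_{\mathbf{a},\mathbf{x}}p(\mathbf{a}|\mathbf{x})R(\mathbf{a}|\mathbf{x})$ for all states $\mathbf{p}$. A measurement is a finite set of pairs $(r,\mu_r)$ of outcomes and effects with $\sum_r\mu_r$ equal to the constant map $1$; every such set is an allowed measurement. A basic measurement is one performed as follows: choose a box and an input for it and observe its output; based on the outputs obtained so far, choose a not-yet-measured box and an input for it; repeat until all boxes are measured; then output $r(\mathbf{a})$, a deterministic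 function of the full output tuple $\mathbf{a}$. Its effect for outcome $\hat r$ is represented by the vector with $R(\mathbf{a}|\mathbf{x})=1$ if $r(\mathbf{a})=\hat r$ and $\mathbf{x}=\mathbf{x}(\mathbf{a})$ (the inputs used when outputs $\mathbf{a}$ occur), and $0$ otherwise. A measurement $\{(r,\mu_r)\}$ is a mixture of basic measurements if there are basic measurements $\{(r,\mu^{(j)}_r)\}$ and probabilities $q_j$ with $\mu_r=\sum_j q_j\mu^{(j)}_r$ for all $r$. *)

From HB Require Import structures.
From mathcomp Require Import all_boot all_order all_algebra.
From mathcomp Require Import reals.
Set Implicit Arguments. Unset Strict Implicit. Unset Printing Implicit Defensive.
Import Order.TTheory GRing.Theory Num.Theory.
Local Open Scope ring_scope.

Section BoxWorld.
Variables (R : realType) (m : nat) (Inp Out : 'I_m -> finType).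

Definition outs := {dffun forall i : 'I_m, Out i}.
Definition ins := {dffun forall i : 'I_m, Inp i}.

(* candidate state: the table of numbers p(a|x) *)
Definition table := outs -> ins -> R.

Definition is_state (p : table) : Prop :=
  [/\ forall a x, 0 <= p a x,
      forall x, \sum_(a : outs) p a x = 1 &
      (* no-signalling: summing out a_i gives a quantity independent of x_i *)
      forall (i : 'I_m) (x x' : ins) (a : outs),
        (forall j, j != i -> x j = x' j) ->
        \sum_(b : outs | [forall j, (j != i) ==> (b j == a j)]) p b x =
        \sum_(b : outs | [forall j, (j != i) ==> (b j == a j)]) p b x'].

(* an effect: a map from states to [0,1] that is linear, i.e. represented by a
   vector Rv indexed by pairs (a,x) *)
Definition is_effect (mu : table -> R) : Prop :=
  (exists Rv : outs -> ins -> R,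
      forall p, is_state p -> mu p = \sum_(a : outs) \sum_(x : ins) p a x * Rv a x)
  /\ (forall p, is_state p -> 0 <= mu p <= 1).

Definition is_measurement (Rt : finType) (M : Rt -> table -> R) : Prop :=
  (forall r, is_effect (M r)) /\
  (forall p, is_state p -> \sum_(r : Rt) M r p = 1).

(* adapt S C g : the input assignment g (inputs used when outputs a occur) can
   be produced by an adaptive sequential procedure, where S is the set of boxes
   not yet measured and C the set of output tuples consistent with the outputs
   observed so far. At each step a not-yet-measured box i and an input xi for
   it are chosen (depending only on the history), and the procedure continues
   separately for each possible output of box i. *)
Inductive adapt (g : outs -> ins) : {set 'I_m} -> pred outs -> Prop :=
| adapt_done (C : pred outs) : adapt g set0 C
| adapt_step (S : {set 'I_m}) (C : pred outs) (i : 'I_m) (xi : Inp i) :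
    i \in S ->
    (forall a, C a -> g a i = xi) ->
    (forall ai : Out i, adapt g (S :\ i) (fun a => C a && (a i == ai))) ->
    adapt g S C.

Definition is_basic (Rt : finType) (B : Rt -> table -> R) : Prop :=
  exists (g : outs -> ins) (rf : outs -> Rt),
    adapt g [set: 'I_m] predT /\
    forall r p, is_state p ->
      B r p = \sum_(a : outs) \sum_(x : ins)
                 p a x * (if (rf a == r) && (x == g a) then 1 else 0).

Definition is_mixture_of_basic (Rt : finType) (M : Rt -> table -> R) : Prop :=
  exists (J : finType) (q : J -> R) (B : J -> Rt -> table -> R),
    [/\ forall j, 0 <= q j,
        \sum_(j : J) q j = 1,
        forall j, is_basic (B j) &
        forall r p, is_state p -> M r p = \sum_(j : J) q j * B j r p].

End BoxWorld.

(* The effect vectors of a measurement can be chosen nonnegative, by Farkas'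
   lemma applied to the cone of unnormalised non-signalling tables; their sum
   [c] represents the unit effect, so [c] differs from the indicator of a fixed
   input by a combination of the no-signalling and normalisation equations.
   For the classical boxes those equations are trivial, so [c] splits into a
   part that does not depend on the output of A_2 and a part that does not
   depend on the output of A_1; shifting a pointwise minimum makes both parts
   nonnegative.  The first part is then realised by measuring the classical
   boxes, then A_1 and then A_2, the second one with A_2 before A_1, and the
   conditional choices of inputs and outcome assemble into a convex mixture of
   basic measurements. *)
From HB Require Import structures.
From mathcomp Require Import all_boot all_order all_algebra.
From mathcomp Require Import reals ring lra.
Set Implicit Arguments. Unset Strict Implicit. Unset Printing Implicit Defensive.
Import Order.TTheory GRing.Theory Num.Theory.
Local Open Scope ring_scope.

Section FourierMotzkin.
Variable R : realFieldType.

Definition lin_ineq_solvable d (I : finType) (u : I -> 'I_d -> R) (b : I -> R) :=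
  exists z : 'I_d -> R, forall i, \sum_j u i j * z j <= b i.

Definition lin_ineq_refuted d (I : finType) (u : I -> 'I_d -> R) (b : I -> R) :=
  exists l : I -> R, [/\ forall i, 0 <= l i,
     forall j, \sum_i l i * u i j = 0 & \sum_i l i * b i < 0].

Section Elimination.
Variables (I : finType) (c : I -> R).

(* Rows of the system with the variable of coefficients [c] eliminated: the
   rows [i] with [c i = 0], and for [c p > 0 > c q] the combination
   [- c q * row p + c p * row q]. *)
Definition fm_pair p q := (0 < c p) && (c q < 0).
Definition fm_keep i : R := (c i == 0)%:R.
Definition fm_coefl p q : R := if fm_pair p q then - c q else 0.
Definition fm_coefr p q : R := if fm_pair p q then c p else 0.

Definition fm_row (w : I -> R) (k : I + I * I) : R :=
  match k with
  | inl i => fm_keep i * w i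
  | inr pq => fm_coefl pq.1 pq.2 * w pq.1 + fm_coefr pq.1 pq.2 * w pq.2
  end.

Definition fm_mult (l : I + I * I -> R) (i : I) : R :=
  l (inl i) * fm_keep i + \sum_k l (inr (i, k)) * fm_coefl i k
                        + \sum_k l (inr (k, i)) * fm_coefr k i.

Lemma fm_mult_row l (w : I -> R) :
  \sum_i fm_mult l i * w i = \sum_k l k * fm_row w k.
Proof.
rewrite big_sumType /=.
under eq_bigr do rewrite /fm_mult !mulrDl.
rewrite !big_split /= -addrA; congr (_ + _).
  by apply: eq_bigr => i _; rewrite mulrA.
rewrite (_ : \sum_(pq : I * I) _ = \sum_p \sum_q l (inr (p, q)) * fm_row w (inr (p, q)));
  last by rewrite pair_bigA; apply: eq_bigr => -[p q] _.
under [RHS]eq_bigr do (under eq_bigr do rewrite mulrDr); rewrite /=.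
under [RHS]eq_bigr do rewrite big_split /=.
rewrite big_split /=; congr (_ + _).
  apply: eq_bigr => i _; rewrite mulr_suml; apply: eq_bigr => k _.
  by rewrite !mulrA.
rewrite exchange_big /=; apply: eq_bigr => i _; rewrite mulr_suml.
by apply: eq_bigr => k _; rewrite !mulrA.
Qed.

Lemma fm_row_eliminated k : fm_row c k = 0.
Proof.
case: k => [i|[p q]] /=; rewrite /fm_keep /fm_coefl /fm_coefr.
  by case: eqP => [->|]; rewrite ?mulr0 ?mul0r.
by case: ifP => _; [rewrite mulNr mulrC addNr | rewrite !mul0r addr0].
Qed.

Lemma fm_mult_ge0 l : (forall k, 0 <= l k) -> forall i, 0 <= fm_mult l i.
Proof.
move=> l_ge0 i; rewrite /fm_mult; apply: addr_ge0; first apply: addr_ge0.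
- by apply: mulr_ge0 => //; rewrite /fm_keep ler0n.
- apply: sumr_ge0 => k _; apply: mulr_ge0 => //; rewrite /fm_coefl /fm_pair.
  by case: ifP => // /andP [_ h]; rewrite oppr_ge0 ltW.
- apply: sumr_ge0 => k _; apply: mulr_ge0 => //; rewrite /fm_coefr /fm_pair.
  by case: ifP => // /andP [h _]; rewrite ltW.
Qed.

Lemma fm_row_sum d (v : I -> 'I_d -> R) (z : 'I_d -> R) k :
  \sum_j fm_row (v^~ j) k * z j = fm_row (fun i => \sum_j v i j * z j) k.
Proof.
case: k => [i|[p q]] /=.
  by rewrite mulr_sumr; apply: eq_bigr => j _; rewrite mulrA.
rewrite !mulr_sumr -big_split /=; apply: eq_bigr => j _.
by rewrite mulrDl !mulrA.
Qed.

End Elimination.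

Section LastVariable.
Variables (d : nat) (I : finType) (u : I -> 'I_d.+1 -> R) (b : I -> R).

Definition last_col i := u i ord_max.
Definition init_cols i j := u i (lift ord_max j).

Lemma sum_last_col i (z : 'I_d.+1 -> R) :
  \sum_j u i j * z j = \sum_j init_cols i j * z (lift ord_max j) + last_col i * z ord_max.
Proof.
rewrite big_ord_recr /=; congr (_ + _); apply: eq_bigr => j _.
by rewrite /init_cols (_ : lift ord_max j = widen_ord (leqnSn d) j) //;
   apply: val_inj; rewrite /= /bump leqNgt ltn_ord.
Qed.

Lemma fm_lift_solvable :
  lin_ineq_solvable (fun k j => fm_row last_col (init_cols^~ j) k) (fm_row last_col b) ->
  lin_ineq_solvable u b.
Proof.
move=> [z' z'P].
pose c := last_col; pose s i := \sum_j init_cols i j * z' j.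
have elimP k : fm_row c s k <= fm_row c b k by have := z'P k; rewrite fm_row_sum.
(* the last variable has to lie between all lower bounds [L q] and upper bounds [U p] *)
pose L q := (b q - s q) / c q.
pose U p := (b p - s p) / c p.
pose lo := \big[Order.max/0]_(q | c q < 0) L q.
pose zd := \big[Order.min/lo]_(p | 0 < c p) U p.
have LU p q : 0 < c p -> c q < 0 -> L q <= U p.
  move=> hp hq; have := elimP (inr (p, q)).
  rewrite /= /fm_coefl /fm_coefr /fm_pair hp hq /= => h.
  rewrite /U ler_pdivlMr //.
  have eX : b q - s q = L q * c q by rewrite /L divfK // ltr0_neq0.
  have : 0 <= (- c q) * (b p - s p - L q * c p).
    have -> : (- c q) * (b p - s p - L q * c p) =
        (- c q * b p + c p * b q) - (- c q * s p + c p * s q)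
        - c p * ((b q - s q) - L q * c q) by ring.
    by rewrite eX subrr mulr0 subr0 subr_ge0.
  by rewrite pmulr_rge0 ?oppr_gt0 // => h3; lra.
have L_le q : c q < 0 -> L q <= zd.
  move=> hq; apply: le_bigmin; first exact: le_bigmax_cond.
  by move=> p hp; apply: LU.
have le_U p : 0 < c p -> zd <= U p by move=> hp; apply: bigmin_le_cond.
exists (fun j => if unlift ord_max j is Some j' then z' j' else zd) => i.
rewrite sum_last_col unlift_none.
under eq_bigr do rewrite liftK.
rewrite -/(s i) -/(c i).
case: (ltrgt0P (c i)) => hc.
- by have := le_U i hc; rewrite /U ler_pdivlMr // => h; lra.
- by have := L_le i hc; rewrite /L ler_ndivrMr // => h; lra.
- have := elimP (inl i); rewrite /= /fm_keep hc eqxx !mul1r => h.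
  by rewrite mul0r addr0.
Qed.

Lemma fm_lift_refuted :
  lin_ineq_refuted (fun k j => fm_row last_col (init_cols^~ j) k) (fm_row last_col b) ->
  lin_ineq_refuted u b.
Proof.
move=> [l [l_ge0 l_u l_b]].
exists (fm_mult last_col l); split; first exact: fm_mult_ge0.
- move=> j; case: (unliftP ord_max j) => [j'|] ->.
    by rewrite -[RHS](l_u j') -fm_mult_row.
  transitivity (\sum_i fm_mult last_col l i * last_col i) => //.
  by rewrite fm_mult_row big1 // => k _; rewrite fm_row_eliminated mulr0.
- by rewrite fm_mult_row.
Qed.

End LastVariable.

Lemma lin_ineq_alternative d (I : finType) (u : I -> 'I_d -> R) (b : I -> R) :
  lin_ineq_solvable u b \/ lin_ineq_refuted u b.
Proof.
elim: d I u b => [|d IH] I u b.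
  case: (boolP [forall i, 0 <= b i]) => [/forallP b_ge0|].
    by left; exists (fun _ => 0) => i; rewrite big_ord0.
  rewrite negb_forall => /existsP [i0 bi0].
  right; exists (fun i => (i == i0)%:R); split.
  - by move=> i; rewrite ler0n.
  - by case.
  - rewrite (bigD1 i0) //= eqxx mul1r big1 ?addr0; first by rewrite ltNge.
    by move=> i /negbTE ->; rewrite mul0r.
case: (IH _ (fun k j => fm_row (last_col u) (init_cols u ^~ j) k) (fm_row (last_col u) b)).
- by move/fm_lift_solvable; left.
- by move/fm_lift_refuted; right.
Qed.

Lemma farkas (V K : finType) (H : K -> V -> R) (f : V -> R) :
  (forall p : V -> R, (forall v, 0 <= p v) -> (forall k, \sum_v H k v * p v = 0) ->
     0 <= \sum_v f v * p v) ->
  exists y : K -> R, forall v, 0 <= f v - \sum_k y k * H k v.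
Proof.
move=> f_cone.
have sum_rank (G : 'I_#|K| -> R) : \sum_j G j = \sum_k G (enum_rank k).
  by rewrite (reindex enum_rank) //; exists enum_val => x _; [exact: enum_rankK | exact: enum_valK].
case: (lin_ineq_alternative (fun v (j : 'I_#|K|) => H (enum_val j) v) f).
- move=> [z Hz]; exists (fun k => z (enum_rank k)) => v.
  rewrite subr_ge0; have := Hz v; rewrite sum_rank.
  by under eq_bigr do rewrite enum_rankK mulrC.
- move=> [l [l_ge0 l_H l_f]].
  suff l_cone : forall k, \sum_v H k v * l v = 0.
    have := f_cone l l_ge0 l_cone; under eq_bigr do rewrite mulrC.
    by rewrite leNgt l_f.
  move=> k; rewrite -[RHS](l_H (enum_rank k)) enum_rankK.
  by apply: eq_bigr => v _; rewrite mulrC.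
Qed.

End FourierMotzkin.

Section ProductMeasure.
Variables (R : comNzRingType) (I J : finType) (w : I -> J -> R).
Hypothesis w_sum1 : forall i, \sum_j w i j = 1.

Lemma sum_prod_ffun1 : \sum_(f : {ffun I -> J}) \prod_i w i (f i) = 1.
Proof. by rewrite -bigA_distr_bigA big1 // => i _; exact: w_sum1. Qed.

Lemma sum_prod_ffun_marginal (h : J -> R) (i0 : I) :
  \sum_(f : {ffun I -> J}) (\prod_i w i (f i)) * h (f i0) = \sum_j w i0 j * h j.
Proof.
pose F i j := if i == i0 then w i j * h j else w i j.
have E : \prod_i \sum_j F i j = \sum_j w i0 j * h j.
  rewrite (bigD1 i0) //= [X in _ * X]big1; last by move=> i /negbTE hi; rewrite /F hi w_sum1.
  by rewrite mulr1 /F eqxx.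
rewrite bigA_distr_bigA in E; rewrite -E.
apply: eq_bigr => f _; rewrite (bigD1 i0) //= [in RHS](bigD1 i0) //= /F eqxx.
by rewrite mulrAC; congr (_ * _); apply: eq_bigr => i /negbTE ->.
Qed.

End ProductMeasure.

Section BigSums.
Variables (R : nzSemiRingType) (T : finType).

Lemma sum_pred_delta (P : pred T) (x : T) : \sum_(z | P z) (z == x)%:R = (P x)%:R :> R.
Proof.
rewrite big_mkcond (bigD1 x) //= eqxx big1 ?addr0; first by case: (P x).
by move=> z /negbTE ->; case: (P z).
Qed.

Lemma sum_delta (x : T) (F : T -> R) : \sum_z (z == x)%:R * F z = F x.
Proof.
rewrite (bigD1 x) //= eqxx mul1r big1 ?addr0 // => z /negbTE ->; by rewrite mul0r.
Qed.

Lemma sum_pair (A B : finType) (F : A * B -> R) :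
  \sum_(v : A * B) F v = \sum_a \sum_b F (a, b).
Proof. by rewrite pair_bigA; apply: eq_bigr => -[]. Qed.

End BigSums.

Section Agreement.
Variables (m : nat) (T : 'I_m -> finType).
Local Notation family := {dffun forall i : 'I_m, T i}.
Implicit Types (P Q : pred 'I_m) (a b c d : family).

Definition agree_off P a b := [forall j, P j || (a j == b j)].

Definition overwrite P a d : family :=
  [ffun j => if P j then d j else a j].

Lemma agree_off_refl P a : agree_off P a a.
Proof. by apply/forallP => j; rewrite eqxx orbT. Qed.

Lemma agree_offC P a b : agree_off P a b = agree_off P b a.
Proof. by apply: eq_forallb => j; rewrite eq_sym. Qed.

Lemma agree_off_trans P a b c : agree_off P a b -> agree_off P b c -> agree_off P a c.
Proof.
move=> /forallP ab /forallP bc; apply/forallP => j.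
by case/orP: (ab j) => [->//|/eqP ->]; rewrite bc.
Qed.

Lemma agree_off_sub P Q a b : (forall j, P j -> Q j) -> agree_off P a b -> agree_off Q a b.
Proof.
move=> PQ /forallP ab; apply/forallP => j.
by case/orP: (ab j) => [/PQ ->//|->]; rewrite orbT.
Qed.

Lemma agree_off1 i a b : [forall j, (j != i) ==> (b j == a j)] = agree_off (pred1 i) b a.
Proof. by apply: eq_forallb => j /=; case: (j =P i). Qed.

Lemma agree_off_eq P a b j : agree_off P a b -> ~~ P j -> a j = b j.
Proof. by move=> /forallP /(_ j) /orP [->|/eqP] . Qed.

Lemma agree_off_fix P i (ai : T i) a b :
  agree_off P a b -> a i = ai -> b i = ai -> agree_off [pred j | P j && (j != i)] a b.
Proof.
move=> /forallP ab ai_a ai_b; apply/forallP => j.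
case: (eqVneq j i) => [->|ji]; first by rewrite ai_a ai_b eqxx orbT.
by rewrite /= ji andbT; exact: ab.
Qed.

Lemma agree_off1_single i a b : (#|T i| <= 1)%N -> agree_off (pred1 i) a b -> a = b.
Proof.
move=> /card_le1_eqP Ti ab; apply/ffunP => j.
case: (eqVneq j i) => [->|ji]; first exact: Ti.
by apply: agree_off_eq ab _; rewrite /= ji.
Qed.

Lemma overwrite_agree P a d : agree_off P (overwrite P a d) a.
Proof. by apply/forallP => j; rewrite ffunE; case: (P j); rewrite //= eqxx. Qed.

Lemma overwrite_agree_eq P a b d : agree_off P a b -> overwrite P a d = overwrite P b d.
Proof.
move=> ab; apply/ffunP => j; rewrite !ffunE.
by case Pj: (P j) => //; apply: agree_off_eq ab _; rewrite Pj.
Qed.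

Lemma overwrite_id P a d : agree_off P d a -> overwrite P a d = d.
Proof.
move=> da; apply/ffunP => j; rewrite ffunE.
by case Pj: (P j) => //; rewrite (agree_off_eq da) ?Pj.
Qed.

Lemma sum_agree_off1 (R : nmodType) i d (F : family -> R) :
  \sum_(a : family | a i == d i) \sum_(b | agree_off (pred1 i) b a) F b = \sum_b F b.
Proof.
transitivity (\sum_(a : family) \sum_(b : family) (if (a i == d i) && agree_off (pred1 i) b a then F b else 0)).
  rewrite big_mkcond; apply: eq_bigr => a _.
  by case: ifP => _ /=; [rewrite big_mkcond | rewrite big1].
rewrite exchange_big; apply: eq_bigr => b _.
pose bd := overwrite (pred1 i) b d.
rewrite (bigD1 bd) //= big1 ?addr0.
  by rewrite agree_offC overwrite_agree ffunE /= !eqxx.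
move=> a abd; case: ifP => // /andP [/eqP ai ba]; case/eqP: abd.
apply/ffunP => j; rewrite ffunE /=.
by case: (eqVneq j i) => [->//|ji]; rewrite (agree_off_eq ba) //= ji.
Qed.

End Agreement.

Section StateCone.
Variables (R : realType) (m : nat) (Inp Out : 'I_m -> finType).
Hypothesis Inp_gt0 : forall i, (0 < #|Inp i|)%N.
Hypothesis Out_gt0 : forall i, (0 < #|Out i|)%N.
Local Notation O := (outs Out).
Local Notation I := (ins Inp).
Local Notation table := (table R Inp Out).

Definition pairing (f : O * I -> R) (p : table) := \sum_(v : O * I) f v * p v.1 v.2.

Lemma pairingE f p : pairing f p = \sum_a \sum_x f (a, x) * p a x.
Proof. by rewrite /pairing pair_bigA; apply: eq_bigr => -[]. Qed.

(* The linear equations cutting out the span of the states: for each box [i],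
   inputs [x, x'] differing at most at [i] and outputs [a], the no-signalling
   equation at [(i, x, x', a)], and for all inputs [x, x'] the equality of the
   total weights of [x] and [x']. *)
Definition state_eqn := (('I_m * (I * I * O)) + (I * I))%type.

Definition state_eqn_coef (k : state_eqn) (v : O * I) : R :=
  match k with
  | inl (i, (x, x', a)) =>
      if agree_off (pred1 i) x x' then
        (agree_off (pred1 i) v.1 a)%:R * ((v.2 == x)%:R - (v.2 == x')%:R)
      else 0
  | inr (x, x') => (v.2 == x)%:R - (v.2 == x')%:R
  end.

Lemma pairing_total_eqn p x x' :
  pairing (state_eqn_coef (inr (x, x'))) p = \sum_a p a x - \sum_a p a x'.
Proof.
rewrite pairingE /=.
under eq_bigr do (under eq_bigr do rewrite mulrBl; rewrite big_split /= sumrN).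
rewrite big_split /= sumrN.
by under eq_bigr do rewrite sum_delta; under [X in _ - X]eq_bigr do rewrite sum_delta.
Qed.

Lemma pairing_ns_eqn p i x x' a : agree_off (pred1 i) x x' ->
  pairing (state_eqn_coef (inl (i, (x, x', a)))) p =
  \sum_(b | agree_off (pred1 i) b a) p b x - \sum_(b | agree_off (pred1 i) b a) p b x'.
Proof.
move=> xx'; rewrite pairingE /= xx' -sumrB [RHS]big_mkcond /=.
apply: eq_bigr => b _.
under eq_bigr do rewrite -mulrA mulrBl mulrBr.
rewrite big_split /= sumrN.
under eq_bigr do rewrite mulrCA; rewrite sum_delta.
under eq_bigr do rewrite mulrCA; rewrite sum_delta.
by case: ifP; rewrite ?mul1r ?mul0r ?subrr.
Qed.

Lemma sum_ns_agree_off i (a : O) (p : table) x :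
  \sum_(b : O | [forall j, (j != i) ==> (b j == a j)]) p b x =
  \sum_(b | agree_off (pred1 i) b a) p b x.
Proof. by apply: eq_bigl => b; rewrite agree_off1. Qed.

Definition state_cone (p : table) :=
  (forall a x, 0 <= p a x) /\ (forall k, pairing (state_eqn_coef k) p = 0).

Lemma state_in_cone p : is_state p -> state_cone p.
Proof.
move=> [p_ge0 p_sum1 p_ns]; split => // -[[i [[x x'] a]]|[x x']].
- case xx' : (agree_off (pred1 i) x x').
    rewrite pairing_ns_eqn // -!sum_ns_agree_off (p_ns i x x') ?subrr // => j ji.
    by apply: agree_off_eq xx' _; rewrite /= ji.
  by rewrite pairingE /= xx' big1 // => b _; rewrite big1 // => z _; rewrite mul0r.
- by rewrite pairing_total_eqn !p_sum1 subrr.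
Qed.

Definition ref_input : I := [ffun i => enum_val (Ordinal (Inp_gt0 i))].

Lemma state_cone_scaled p : state_cone p ->
  (forall a x, p a x = 0) \/ exists2 s, 0 < s & is_state (fun a x => p a x / s).
Proof.
move=> [p_ge0 p_eqn].
have total x : \sum_a p a x = \sum_a p a ref_input.
  by apply/eqP; rewrite -subr_eq0 -pairing_total_eqn p_eqn.
set s := \sum_a p a ref_input.
have [s0|s_neq0] := eqVneq s 0.
  left => a x; move: (total x); rewrite -/s s0 => /eqP.
  by rewrite psumr_eq0 // => /allP /(_ a (mem_index_enum a)) /eqP.
have s_gt0 : 0 < s by rewrite lt0r s_neq0 sumr_ge0.
right; exists s => //; split.
- by move=> a x; rewrite divr_ge0 // ltW.
- by move=> x; rewrite -mulr_suml total mulfV.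
- move=> i x x' a xx'; rewrite -!mulr_suml; congr (_ * _).
  apply/eqP; rewrite -subr_eq0 !sum_ns_agree_off -pairing_ns_eqn ?p_eqn //.
  by apply/forallP => j /=; case: (j =P i) => //= /eqP ji; rewrite xx'.
Qed.

Lemma pairing_sub_eqns f (y : state_eqn -> R) p : state_cone p ->
  pairing (fun v => f v - \sum_k y k * state_eqn_coef k v) p = pairing f p.
Proof.
move=> [_ p_eqn]; rewrite /pairing.
under eq_bigr do rewrite mulrBl; rewrite sumrB.
rewrite (_ : \sum_v (\sum_k y k * state_eqn_coef k v) * p v.1 v.2 = 0) ?subr0 //.
under eq_bigr do rewrite mulr_suml; rewrite exchange_big /= big1 // => k _.
transitivity (y k * pairing (state_eqn_coef k) p); last by rewrite p_eqn mulr0.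
by rewrite /pairing mulr_sumr; apply: eq_bigr => v _; rewrite mulrA.
Qed.

Lemma nonneg_on_states_rep f : (forall p, is_state p -> 0 <= pairing f p) ->
  exists y : state_eqn -> R, forall v, 0 <= f v - \sum_k y k * state_eqn_coef k v.
Proof.
move=> f_ge0; apply: farkas => p p_ge0 p_eqn.
pose pt : table := fun a x => p (a, x).
have pt_cone : state_cone pt.
  split=> [a x|k]; first exact: p_ge0.
  by rewrite -(p_eqn k) /pairing; apply: eq_bigr => -[a x] _.
have -> : \sum_v f v * p v = pairing f pt by apply: eq_bigr => -[a x].
case: (state_cone_scaled pt_cone) => [pt0|[s s_gt0 pts]].
  by rewrite /pairing big1 // => v _; rewrite pt0 mulr0.
have : 0 <= pairing f pt / s.
  by rewrite /pairing mulr_suml; under eq_bigr do rewrite -mulrA; exact: (f_ge0 _ pts).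
by rewrite pmulr_lge0 ?invr_gt0.
Qed.

Definition ref_output : O := [ffun i => enum_val (Ordinal (Out_gt0 i))].

Lemma card_outs_gt0 : (0 < #|O|)%N.
Proof. by apply/card_gt0P; exists ref_output. Qed.

Definition uniform_state : table := fun a x => #|O|%:R^-1.

Lemma uniform_state_gt0 a x : 0 < uniform_state a x.
Proof. by rewrite /uniform_state invr_gt0 ltr0n card_outs_gt0. Qed.

Lemma uniform_stateP : is_state uniform_state.
Proof.
split=> // [a x|x]; first exact/ltW/uniform_state_gt0.
by rewrite sumr_const -[_ *+ _]mulr_natr mulVf // pnatr_eq0 -lt0n card_outs_gt0.
Qed.

Lemma zero_on_states_rep g : (forall p, is_state p -> pairing g p = 0) ->
  exists y : state_eqn -> R, forall v, g v = \sum_k y k * state_eqn_coef k v.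
Proof.
move=> g0; have [y y_ge0] : exists y : state_eqn -> R,
    forall v, 0 <= g v - \sum_k y k * state_eqn_coef k v.
  by apply: nonneg_on_states_rep => p ps; rewrite g0.
exists y => v; apply/eqP; rewrite -subr_eq0; apply/eqP; move: v.
(* a nonnegative vector vanishing on the faithful uniform state is zero *)
have := pairing_sub_eqns g y (state_in_cone uniform_stateP).
rewrite g0; last exact: uniform_stateP.
rewrite /pairing => /eqP.
rewrite psumr_eq0 => [/allP rem v|v _]; last by rewrite mulr_ge0 // ltW ?uniform_state_gt0.
by move: (rem v (mem_index_enum v)); rewrite mulf_eq0 (gt_eqF (uniform_state_gt0 _ _)) orbF => /eqP.
Qed.

Definition det_state (b : O) : table := fun a x => (a == b)%:R.

Lemma det_stateP b : is_state (det_state b).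
Proof.
split=> // x.
by rewrite /det_state (bigD1 b) //= eqxx big1 ?addr0 // => a /negbTE ->.
Qed.

Lemma measurement_nonneg_reps (Rt : finType) (M : Rt -> table -> R) :
  is_measurement M ->
  exists Rv : Rt -> O -> I -> R, (forall r a x, 0 <= Rv r a x) /\
    forall r p, is_state p -> M r p = \sum_a \sum_x p a x * Rv r a x.
Proof.
move=> [M_eff _].
suff /fin_all_exists [Rv RvP] : forall r, exists Rv : O -> I -> R,
    (forall a x, 0 <= Rv a x) /\
    forall p, is_state p -> M r p = \sum_a \sum_x p a x * Rv a x.
  by exists Rv; split=> r; case: (RvP r).
move=> r; have [[Rv RvE] M01] := M_eff r.
have [y y_ge0] : exists y : state_eqn -> R,
    forall v, 0 <= Rv v.1 v.2 - \sum_k y k * state_eqn_coef k v.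
  apply: nonneg_on_states_rep => p ps; rewrite pairingE.
  have /andP [+ _] := M01 p ps; rewrite RvE //.
  by under eq_bigr do under eq_bigr do rewrite mulrC.
exists (fun a x => Rv a x - \sum_k y k * state_eqn_coef k (a, x)); split.
  by move=> a x; exact: (y_ge0 (a, x)).
move=> p ps; rewrite RvE //.
have := pairing_sub_eqns (fun v => Rv v.1 v.2) y (state_in_cone ps).
rewrite !pairingE => E.
under eq_bigr do under eq_bigr do rewrite mulrC.
by rewrite -E; apply: eq_bigr => a _; apply: eq_bigr => x _; rewrite mulrC.
Qed.

Lemma unit_effect_rep (c : O -> I -> R) :
  (forall p, is_state p -> \sum_a \sum_x p a x * c a x = 1) ->
  exists y : state_eqn -> R,
    forall a x, c a x = (x == ref_input)%:R + \sum_k y k * state_eqn_coef k (a, x).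
Proof.
move=> c1; have [y yE] : exists y : state_eqn -> R, forall v,
    c v.1 v.2 - (v.2 == ref_input)%:R = \sum_k y k * state_eqn_coef k v.
  apply: zero_on_states_rep => p ps; rewrite pairingE.
  under eq_bigr do under eq_bigr do rewrite mulrBl.
  under eq_bigr do rewrite sumrB.
  rewrite sumrB; apply/eqP; rewrite subr_eq0; apply/eqP.
  have [_ p_sum1 _] := ps; transitivity (1 : R).
    by rewrite -(c1 p ps); apply: eq_bigr => a _; apply: eq_bigr => x _; rewrite mulrC.
  by rewrite -[LHS](p_sum1 ref_input); apply: eq_bigr => a _; rewrite /= sum_delta.
by exists y => a x; rewrite -(yE (a, x)) addrC subrK.
Qed.

Lemma unit_effect_row_sum1 (c : O -> I -> R) :
  (forall p, is_state p -> \sum_a \sum_x p a x * c a x = 1) -> forall b, \sum_x c b x = 1.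
Proof.
move=> c1 b; rewrite -(c1 _ (det_stateP b)) (bigD1 b) //= /det_state eqxx.
rewrite [X in _ + X]big1 ?addr0; first by apply: eq_bigr => x _; rewrite mul1r.
by move=> a /negbTE ->; rewrite big1 // => x _; rewrite mul0r.
Qed.

Lemma measurement_outcomes_gt0 (Rt : finType) (M : Rt -> table -> R) :
  is_measurement M -> (0 < #|Rt|)%N.
Proof.
move=> [_ M1]; apply/card_gt0P; case: (pickP (@predT Rt)) => [r _|noRt]; first by exists r.
have := M1 _ uniform_stateP; rewrite big1 => [/eqP|r _]; last by have := noRt r.
by rewrite eq_sym oner_eq0.
Qed.

End StateCone.

Section TwoBoxes.
Variables (R : realType) (n : nat) (Inp Out : 'I_n.+2 -> finType).
Hypothesis classical_boxes : forall i : 'I_n.+2, (2 <= i)%N -> #|Inp i| = 1%N.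
Local Notation O := (outs Out).
Local Notation I := (ins Inp).

Definition box0 : 'I_n.+2 := ord0.
Definition box1 : 'I_n.+2 := lift ord0 ord0.
Definition boxes01 : pred 'I_n.+2 := [pred j | (j == box0) || (j == box1)].

Lemma sub_boxes01_box0 j : pred1 box0 j -> boxes01 j.
Proof. by move=> /eqP ->. Qed.

Lemma sub_boxes01_box1 j : pred1 box1 j -> boxes01 j.
Proof. by move=> /eqP ->. Qed.

Section EquationParts.
Variable y : state_eqn Inp Out -> R.

Definition total_part (z : I) : R :=
  \sum_(xx : I * I) y (inr xx) * ((z == xx.1)%:R - (z == xx.2)%:R).

Definition ns_part i (b : O) (z : I) : R :=
  \sum_(t : I * I * O) y (inl (i, t)) * state_eqn_coef R (inl (i, t)) (b, z).

Lemma state_eqn_parts b z :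
  \sum_k y k * state_eqn_coef R k (b, z) = total_part z + \sum_i ns_part i b z.
Proof.
rewrite big_sumType /= addrC; congr (_ + _); first by apply: eq_bigr => -[].
by rewrite pair_bigA; apply: eq_bigr => -[].
Qed.

Lemma ns_part_classical (i : 'I_n.+2) b z : (2 <= i)%N -> ns_part i b z = 0.
Proof.
move=> i2; rewrite /ns_part big1 // => -[[x x'] a] _ /=.
case: ifP => [xx'|_]; last by rewrite mulr0.
by rewrite (agree_off1_single _ xx') ?classical_boxes // subrr !mulr0.
Qed.

Lemma sum_ns_part b z : \sum_i ns_part i b z = ns_part box0 b z + ns_part box1 b z.
Proof.
rewrite !big_ord_recl big1 ?addr0 ?addrA // => i _.
by apply: ns_part_classical; rewrite /= /bump.
Qed.

Lemma ns_part_agree i b b' z : agree_off (pred1 i) b b' -> ns_part i b z = ns_part i b' z.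
Proof.
move=> bb'; apply: eq_bigr => -[[x x'] a] _ /=.
case: ifP => // _; suff -> : agree_off (pred1 i) b a = agree_off (pred1 i) b' a by [].
apply/idP/idP => h; last exact: agree_off_trans h.
by apply: agree_off_trans h; rewrite agree_offC.
Qed.

Lemma ns_part_marg i b z : \sum_(z' | agree_off (pred1 i) z' z) ns_part i b z' = 0.
Proof.
rewrite exchange_big /= big1 // => -[[x x'] a] _ /=.
rewrite -mulr_sumr; case xx': (agree_off (pred1 i) x x'); last first.
  by rewrite big1 ?mulr0 // => z' _; rewrite mulr0.
rewrite -big_distrr /= sumrB !sum_pred_delta.
suff -> : agree_off (pred1 i) x z = agree_off (pred1 i) x' z by rewrite subrr !mulr0.
apply/idP/idP => h; last exact: agree_off_trans h.
by apply: agree_off_trans h; rewrite agree_offC.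
Qed.

End EquationParts.

(* [w01] weighs the order "box 0, then box 1" and [w10] the reverse order: the
   first box's input may not depend on either output, the second one's only on
   the output of the first. *)
Record sequential_split (c w01 w10 : O -> I -> R) : Prop := SequentialSplit {
  split_sum : forall b z, c b z = w01 b z + w10 b z;
  w01_ge0 : forall b z, 0 <= w01 b z;
  w10_ge0 : forall b z, 0 <= w10 b z;
  w01_agree : forall b b' z, agree_off (pred1 box1) b b' -> w01 b z = w01 b' z;
  w10_agree : forall b b' z, agree_off (pred1 box0) b b' -> w10 b z = w10 b' z;
  w01_marg : forall b b' z, agree_off boxes01 b b' ->
    \sum_(z' | agree_off (pred1 box1) z' z) w01 b z' =
    \sum_(z' | agree_off (pred1 box1) z' z) w01 b' z';
  w10_marg : forall b b' z, agree_off boxes01 b b' ->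
    \sum_(z' | agree_off (pred1 box0) z' z) w10 b z' =
    \sum_(z' | agree_off (pred1 box0) z' z) w10 b' z'
}.

Section SplitNonneg.
Variables (c u01 u10 : O -> I -> R).
Hypothesis c_ge0 : forall b z, 0 <= c b z.
Hypothesis c_split : forall b z, c b z = u01 b z + u10 b z.
Hypothesis u01_agree : forall b b' z, agree_off (pred1 box1) b b' -> u01 b z = u01 b' z.
Hypothesis u10_agree : forall b b' z, agree_off (pred1 box0) b b' -> u10 b z = u10 b' z.
Hypothesis u01_marg : forall b b' z,
  \sum_(z' | agree_off (pred1 box1) z' z) u01 b z' = \sum_(z' | agree_off (pred1 box1) z' z) u01 b' z'.
Hypothesis u10_marg : forall b b' z,
  \sum_(z' | agree_off (pred1 box0) z' z) u10 b z' = \sum_(z' | agree_off (pred1 box0) z' z) u10 b' z'.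

(* Shifting weight [min01] from [u01] to [u10] makes both nonnegative. *)
Definition min01 b z := \big[Order.min/u01 b z]_(b' | agree_off boxes01 b' b) u01 b' z.

Lemma min01_le b b' z : agree_off boxes01 b' b -> min01 b z <= u01 b' z.
Proof. by move=> b'b; apply: bigmin_le_cond. Qed.

Lemma min01_agree b b' z : agree_off boxes01 b b' -> min01 b z = min01 b' z.
Proof.
have le b1 b2 : agree_off boxes01 b1 b2 -> min01 b2 z <= min01 b1 z.
  move=> b12; apply: le_bigmin; first exact: min01_le.
  by move=> b3 b31; apply: min01_le; apply: agree_off_trans b31 b12.
by move=> bb'; apply/le_anti; rewrite !le // agree_offC.
Qed.

(* The tuple taking [b 1] from [b] and the rest from [b'] has the [u01] of [b']
   and the [u10] of [b]. *)
Lemma min01_lb b z : - u10 b z <= min01 b z.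
Proof.
apply: le_bigmin; first by rewrite -subr_ge0 opprK -c_split.
move=> b' b'b; pose mix := overwrite (pred1 box1) b' b.
have mix_b' : agree_off (pred1 box1) mix b' by exact: overwrite_agree.
have mix_b : agree_off (pred1 box0) mix b.
  apply/forallP => j; rewrite ffunE /=; case: (j =P box0) => //= j0.
  case: (j =P box1) => [_|j1]; first exact: eqxx.
  by rewrite (agree_off_eq b'b) //= negb_or; apply/andP; split; apply/eqP.
by rewrite -(u01_agree _ mix_b') -(u10_agree _ mix_b) -subr_ge0 opprK -c_split.
Qed.

Lemma split_nonneg :
  sequential_split c (fun b z => u01 b z - min01 b z) (fun b z => u10 b z + min01 b z).
Proof.
split=> [b z|b z|b z|b b' z bb'|b b' z bb'|b b' z bb'|b b' z bb'].
- by rewrite c_split addrCA subrK addrC.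
- by rewrite subr_ge0 min01_le ?agree_off_refl.
- by rewrite addrC -[u10 b z]opprK subr_ge0 min01_lb.
- by rewrite (u01_agree _ bb') (min01_agree _ (agree_off_sub sub_boxes01_box1 bb')).
- by rewrite (u10_agree _ bb') (min01_agree _ (agree_off_sub sub_boxes01_box0 bb')).
- rewrite !sumrB (u01_marg b b'); congr (_ - _).
  by apply: eq_bigr => z' _; rewrite (min01_agree _ bb').
- rewrite !big_split /= (u10_marg b b'); congr (_ + _).
  by apply: eq_bigr => z' _; rewrite (min01_agree _ bb').
Qed.

End SplitNonneg.

Lemma sequential_split_exists (Inp_gt0 : forall i, (0 < #|Inp i|)%N)
    (c : O -> I -> R) (y : state_eqn Inp Out -> R) :
  (forall b z, 0 <= c b z) ->
  (forall b z, c b z = (z == ref_input Inp_gt0)%:R + \sum_k y k * state_eqn_coef R k (b, z)) ->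
  exists w01 w10, sequential_split c w01 w10.
Proof.
move=> c_ge0 cE.
pose u01 b z := (z == ref_input Inp_gt0)%:R + total_part y z + ns_part y box1 b z.
pose u10 b z := ns_part y box0 b z.
have cu b z : c b z = u01 b z + u10 b z.
  by rewrite cE state_eqn_parts sum_ns_part /u01 /u10; ring.
have u_marg i (u : O -> I -> R) (v : I -> R) :
  (forall b z, u b z = v z + ns_part y i b z) -> forall b b' z,
  \sum_(z' | agree_off (pred1 i) z' z) u b z' = \sum_(z' | agree_off (pred1 i) z' z) u b' z'.
  by move=> uE b b' z; under eq_bigr do rewrite uE; under [RHS]eq_bigr do rewrite uE;
    rewrite !big_split /= !ns_part_marg.
exists (fun b z => u01 b z - min01 u01 b z), (fun b z => u10 b z + min01 u01 b z).
apply: split_nonneg => // [b b' z|b b' z|b b' z|b b' z].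
- by move=> bb'; rewrite /u01 (ns_part_agree _ _ bb').
- by move=> bb'; rewrite /u10 (ns_part_agree _ _ bb').
- by apply: (u_marg box1 u01 (fun z => (z == ref_input Inp_gt0)%:R + total_part y z)).
- by apply: (u_marg box0 u10 (fun=> 0)) => b1 z1; rewrite add0r.
Qed.

End TwoBoxes.

Arguments box0 {n}.
Arguments box1 {n}.
Arguments boxes01 {n}.
Arguments sub_boxes01_box0 {n}.
Arguments sub_boxes01_box1 {n}.

Section Mixture.
Variables (R : realType) (n : nat) (Inp Out : 'I_n.+2 -> finType).
Hypothesis Inp_gt0 : forall i, (0 < #|Inp i|)%N.
Hypothesis Out_gt0 : forall i, (0 < #|Out i|)%N.
Local Notation O := (outs Out).
Local Notation I := (ins Inp).
Local Notation z0 := (ref_input Inp_gt0).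

Definition mask (P : pred 'I_n.+2) (a : O) := overwrite P a (ref_output Out_gt0).

Lemma mask_agree P a : agree_off P (mask P a) a.
Proof. exact: overwrite_agree. Qed.

Lemma mask_eq P a a' : agree_off P a a' -> mask P a = mask P a'.
Proof. exact: overwrite_agree_eq. Qed.

Lemma mask_boxes01_agree (P : pred 'I_n.+2) a :
  (forall j, P j -> boxes01 j) -> agree_off boxes01 (mask boxes01 a) (mask P a).
Proof.
move=> P01; apply: agree_off_trans (mask_agree _ _) _; rewrite agree_offC.
exact: agree_off_sub (mask_agree _ _).
Qed.

Section Conditional.
Variables (i : 'I_n.+2) (w : O -> I -> R).
Hypothesis w_ge0 : forall b z, 0 <= w b z.

Definition marg b z := \sum_(z' | agree_off (pred1 i) z' z) w b z'.

Definition cond b z z' : R :=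
  if marg b z == 0 then (z' == z)%:R
  else if agree_off (pred1 i) z' z then w b z' / marg b z else 0.

Lemma marg_ge0 b z : 0 <= marg b z.
Proof. exact: sumr_ge0. Qed.

Lemma cond_ge0 b z z' : 0 <= cond b z z'.
Proof.
rewrite /cond; case: ifP => _; first exact: ler0n.
by case: ifP => _ //; rewrite divr_ge0 ?marg_ge0.
Qed.

Lemma cond_sum1 b z : \sum_z' cond b z z' = 1.
Proof.
rewrite /cond; case: (eqVneq (marg b z) 0) => m0; first by rewrite (sum_pred_delta _ predT).
by rewrite -big_mkcond /= -mulr_suml mulfV.
Qed.

Lemma marg_cond b z z' :
  marg b z * cond b z z' = if agree_off (pred1 i) z' z then w b z' else 0.
Proof.
rewrite /cond; case: ifPn => [/eqP m0|m0]; last first.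
  by case: ifP => _; rewrite ?mulr0 // mulrC divfK.
rewrite m0 mul0r; case: ifP => // z'z; apply/esym/eqP.
move/eqP: m0; rewrite /marg psumr_eq0 => [/allP|v _]; last exact: w_ge0.
by move=> /(_ z' (mem_index_enum _)); rewrite z'z.
Qed.

(* Choosing the class of [z] by its marginal and then [z'] in that class by
   the conditional distribution reproduces [w b]. *)
Lemma marg_cond_inputs b x :
  \sum_(z : I) (if z i == z0 i then marg b z else 0) *
     \sum_z' cond b z z' * (x == overwrite (pred1 i) z z')%:R = w b x.
Proof.
transitivity (\sum_(z : I | z i == z0 i) \sum_(z' | agree_off (pred1 i) z' z)
                 w b z' * (x == z')%:R).
  rewrite [RHS]big_mkcond; apply: eq_bigr => z _; case: ifP => _; last by rewrite mul0r.
  rewrite mulr_sumr [RHS]big_mkcond; apply: eq_bigr => z' _.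
  rewrite mulrA marg_cond; case: ifP => z'z; last by rewrite mul0r.
  by rewrite overwrite_id.
rewrite sum_agree_off1 (bigD1 x) //= eqxx mulr1 big1 ?addr0 // => z' /negbTE.
by rewrite eq_sym => ->; rewrite mulr0.
Qed.

Definition cond_weight (F : {ffun O -> {ffun I -> I}}) : R := \prod_b \prod_z cond b z (F b z).

Lemma cond_row_sum1 b : \sum_(phi : {ffun I -> I}) \prod_z cond b z (phi z) = 1.
Proof. by apply: sum_prod_ffun1 => z; apply: cond_sum1. Qed.

Lemma cond_weight_sum1 : \sum_F cond_weight F = 1.
Proof. exact: sum_prod_ffun1 cond_row_sum1. Qed.

Lemma cond_weight_marginal b z (h : I -> R) :
  \sum_F cond_weight F * h (F b z) = \sum_z' cond b z z' * h z'.
Proof.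
rewrite /cond_weight (sum_prod_ffun_marginal cond_row_sum1 (fun phi : {ffun I -> I} => h (phi z))).
exact: sum_prod_ffun_marginal (cond_sum1 b) h z.
Qed.

End Conditional.

Variables (Rt : finType) (c w01 w10 : O -> I -> R) (Rv : Rt -> O -> I -> R) (r0 : Rt).
Hypothesis c_split : sequential_split c w01 w10.
Hypothesis c_norm : forall b, \sum_z c b z = 1.
Hypothesis Rv_ge0 : forall r a x, 0 <= Rv r a x.
Hypothesis Rv_sum : forall a x, \sum_r Rv r a x = c a x.

(* [inl z]: measure box 0 first with input [z 0]; [inr z]: box 1 first.
   The other coordinates of [z] are the inputs of the classical boxes. *)
Definition first_weight b (t : I + I) : R :=
  match t with
  | inl z => if z box1 == z0 box1 then marg box1 w01 b z else 0
  | inr z => if z box0 == z0 box0 then marg box0 w10 b z else 0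
  end.

Definition outcome_dist a x r : R :=
  if c a x == 0 then (r == r0)%:R else Rv r a x / c a x.

Lemma first_weight_ge0 b t : 0 <= first_weight b t.
Proof.
case: t => z /=; case: ifP => _ //; apply: marg_ge0.
  exact: w01_ge0 c_split.
exact: w10_ge0 c_split.
Qed.

Lemma first_weight_sum1 b : \sum_t first_weight b t = 1.
Proof.
rewrite big_sumType /= -(c_norm b).
under [RHS]eq_bigr do rewrite (split_sum c_split).
by rewrite big_split /= -!big_mkcond /= /marg !sum_agree_off1.
Qed.

Lemma c_ge0 a x : 0 <= c a x.
Proof. by rewrite (split_sum c_split) addr_ge0 ?(w01_ge0 c_split) ?(w10_ge0 c_split). Qed.

Lemma outcome_dist_ge0 a x r : 0 <= outcome_dist a x r.
Proof.
by rewrite /outcome_dist; case: ifP => _; rewrite ?ler0n ?divr_ge0 ?c_ge0.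
Qed.

Lemma outcome_dist_sum1 a x : \sum_r outcome_dist a x r = 1.
Proof.
rewrite /outcome_dist; case: (eqVneq (c a x) 0) => c0.
  by rewrite (sum_pred_delta _ predT).
by rewrite -mulr_suml Rv_sum mulfV.
Qed.

Lemma c_outcome_dist a x r : c a x * outcome_dist a x r = Rv r a x.
Proof.
rewrite /outcome_dist; case: ifPn => [/eqP c0|c0]; last by rewrite mulrC divfK.
rewrite c0 mul0r; apply/eqP; rewrite eq_le Rv_ge0 -c0 -Rv_sum.
by rewrite (bigD1 r) //= lerDl sumr_ge0.
Qed.

Definition strategy := ({ffun O -> I + I} * {ffun O -> {ffun I -> I}}
  * {ffun O -> {ffun I -> I}} * {ffun O -> {ffun I -> Rt}})%type.

Definition strategy_inputs (T : {ffun O -> I + I}) (F G : {ffun O -> {ffun I -> I}})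
    (a : O) : I :=
  match T (mask boxes01 a) with
  | inl z => overwrite (pred1 box1) z (F (mask (pred1 box1) a) z)
  | inr z => overwrite (pred1 box0) z (G (mask (pred1 box0) a) z)
  end.

Definition first_weights (T : {ffun O -> I + I}) : R := \prod_b first_weight b (T b).

Definition inputs_weight (T : {ffun O -> I + I}) (F G : {ffun O -> {ffun I -> I}}) : R :=
  first_weights T * cond_weight box1 w01 F * cond_weight box0 w10 G.

Definition outcome_weight (P : {ffun O -> {ffun I -> Rt}}) : R :=
  \prod_a \prod_x outcome_dist a x (P a x).

Definition strategy_weight (j : strategy) : R :=
  inputs_weight j.1.1.1 j.1.1.2 j.1.2 * outcome_weight j.2.

Definition strategy_inputs_of (j : strategy) := strategy_inputs j.1.1.1 j.1.1.2 j.1.2.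

Definition strategy_meas (j : strategy) (r : Rt) (p : table R Inp Out) : R :=
  \sum_a \sum_x p a x *
    (if (j.2 a (strategy_inputs_of j a) == r) && (x == strategy_inputs_of j a) then 1 else 0).

Lemma outcome_row_sum1 a : \sum_(phi : {ffun I -> Rt}) \prod_x outcome_dist a x (phi x) = 1.
Proof. by apply: sum_prod_ffun1 => x; apply: outcome_dist_sum1. Qed.

Lemma strategy_weight_ge0 j : 0 <= strategy_weight j.
Proof.
rewrite /strategy_weight /inputs_weight /first_weights /cond_weight /outcome_weight.
repeat apply: mulr_ge0; apply: prodr_ge0 => a _; try apply: prodr_ge0 => z _.
- exact: first_weight_ge0.
- by apply: cond_ge0; exact: w01_ge0 c_split.
- by apply: cond_ge0; exact: w10_ge0 c_split.
- exact: outcome_dist_ge0.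
Qed.

Lemma strategy_weight_sum1 : \sum_j strategy_weight j = 1.
Proof.
rewrite sum_pair.
under eq_bigr do rewrite /strategy_weight /= -mulr_sumr (sum_prod_ffun1 outcome_row_sum1) mulr1.
rewrite sum_pair; under eq_bigr do rewrite /inputs_weight /= -mulr_sumr cond_weight_sum1 mulr1.
rewrite sum_pair; under eq_bigr do rewrite /= -mulr_sumr cond_weight_sum1 mulr1.
exact: sum_prod_ffun1 first_weight_sum1.
Qed.

Lemma outcome_weight_marginal a x r (g : I) :
  \sum_(P : {ffun O -> {ffun I -> Rt}}) outcome_weight P * (if (P a g == r) && (x == g) then 1 else 0)
  = (x == g)%:R * outcome_dist a x r.
Proof.
have [<-|xg] := eqVneq x g; last first.
  by rewrite mul0r big1 // => P _; rewrite andbF mulr0.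
rewrite mul1r; under eq_bigr do rewrite andbT.
rewrite (sum_prod_ffun_marginal outcome_row_sum1 (fun psi : {ffun I -> Rt} => if psi x == r then 1 else 0)).
rewrite (sum_prod_ffun_marginal (outcome_dist_sum1 a) (fun r' => if r' == r then 1 else 0)).
by rewrite (bigD1 r) //= eqxx mulr1 big1 ?addr0 // => r' /negbTE ->; rewrite mulr0.
Qed.

Definition second_input_weight a x (t : I + I) : R :=
  match t with
  | inl z => \sum_z' cond box1 w01 (mask (pred1 box1) a) z z' * (x == overwrite (pred1 box1) z z')%:R
  | inr z => \sum_z' cond box0 w10 (mask (pred1 box0) a) z z' * (x == overwrite (pred1 box0) z z')%:R
  end.

Lemma cond_weights_marginal a x (T : {ffun O -> I + I}) :
  \sum_(F : {ffun O -> {ffun I -> I}}) \sum_(G : {ffun O -> {ffun I -> I}})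
     inputs_weight T F G * (x == strategy_inputs T F G a)%:R =
  first_weights T * second_input_weight a x (T (mask boxes01 a)).
Proof.
rewrite /inputs_weight /strategy_inputs; case: (T (mask boxes01 a)) => z.
- under eq_bigr do under eq_bigr do rewrite mulrAC.
  under eq_bigr do rewrite -mulr_sumr cond_weight_sum1 mulr1 -mulrA.
  by rewrite -mulr_sumr /= (cond_weight_marginal box1 w01 _ _
    (fun z' => (x == overwrite (pred1 box1) z z')%:R)).
- under eq_bigr do under eq_bigr do rewrite -mulrA.
  under eq_bigr do rewrite -mulr_sumr (cond_weight_marginal box0 w10 _ _
    (fun z' => (x == overwrite (pred1 box0) z z')%:R)).
  by rewrite -mulr_suml -mulr_sumr cond_weight_sum1 mulr1.
Qed.

Lemma inputs_weight_marginal a x :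
  \sum_(T : {ffun O -> I + I}) \sum_(F : {ffun O -> {ffun I -> I}}) \sum_(G : {ffun O -> {ffun I -> I}})
     inputs_weight T F G * (x == strategy_inputs T F G a)%:R = c a x.
Proof.
under eq_bigr do rewrite cond_weights_marginal.
rewrite /first_weights (sum_prod_ffun_marginal first_weight_sum1 (second_input_weight a x)).
rewrite big_sumType /=.
rewrite (split_sum c_split); congr (_ + _).
- rewrite -(w01_agree c_split x (mask_agree (pred1 box1) a)).
  rewrite -(marg_cond_inputs box1 (w01_ge0 c_split)) /=; apply: eq_bigr => z _; congr (_ * _).
  by case: ifP => // _; rewrite /marg (w01_marg c_split _ (mask_boxes01_agree _ sub_boxes01_box1)).
- rewrite -(w10_agree c_split x (mask_agree (pred1 box0) a)).
  rewrite -(marg_cond_inputs box0 (w10_ge0 c_split)) /=; apply: eq_bigr => z _; congr (_ * _).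
  by case: ifP => // _; rewrite /marg (w10_marg c_split _ (mask_boxes01_agree _ sub_boxes01_box0)).
Qed.

Lemma strategy_weight_marginal a x r :
  \sum_j strategy_weight j *
    (if (j.2 a (strategy_inputs_of j a) == r) && (x == strategy_inputs_of j a) then 1 else 0)
  = Rv r a x.
Proof.
rewrite -c_outcome_dist -inputs_weight_marginal !mulr_suml !sum_pair.
apply: eq_bigr => T _; rewrite mulr_suml; apply: eq_bigr => F _; rewrite mulr_suml.
apply: eq_bigr => G _; rewrite /strategy_weight /strategy_inputs_of /=.
under eq_bigr do rewrite -mulrA.
by rewrite -mulr_sumr outcome_weight_marginal mulrA [_ * outcome_dist _ _ _]mulrC mulrA.
Qed.

Lemma strategy_mixture r (p : table R Inp Out) :
  \sum_a \sum_x p a x * Rv r a x = \sum_j strategy_weight j * strategy_meas j r p.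
Proof.
rewrite /strategy_meas; under [RHS]eq_bigr do rewrite mulr_sumr; rewrite [RHS]exchange_big /=.
apply: eq_bigr => a _.
under [RHS]eq_bigr do rewrite mulr_sumr; rewrite [RHS]exchange_big /=.
apply: eq_bigr => x _.
by rewrite -(strategy_weight_marginal a x r) mulr_sumr; apply: eq_bigr => j _; rewrite mulrCA.
Qed.

End Mixture.

Section Adaptive.
Variables (n : nat) (Inp Out : 'I_n.+2 -> finType).
Hypothesis Inp_gt0 : forall i, (0 < #|Inp i|)%N.
Hypothesis Out_gt0 : forall i, (0 < #|Out i|)%N.
Hypothesis classical_boxes : forall i : 'I_n.+2, (2 <= i)%N -> #|Inp i| = 1%N.
Local Notation O := (outs Out).
Local Notation I := (ins Inp).
Variables (T : {ffun O -> I + I}) (F G : {ffun O -> {ffun I -> I}}).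
Local Notation g := (strategy_inputs Out_gt0 T F G).

Lemma adapt_unreachable S (C : pred O) : (forall a, ~~ C a) -> adapt g S C.
Proof.
elim: {S}#|S| {-2}S (erefl #|S|) C => [|k IH] S cardS C noC.
  by move/eqP: cardS; rewrite cards_eq0 => /eqP ->; exact: adapt_done.
have [i iS] : exists i, i \in S by apply/set0Pn; rewrite -card_gt0 cardS.
apply: (@adapt_step _ _ _ g S C i (ref_input Inp_gt0 i) iS) => [a|ai].
  by rewrite (negbTE (noC a)).
apply: IH => [|a]; last by rewrite (negbTE (noC a)).
by move: cardS; rewrite (cardsD1 i) iS => -[].
Qed.

(* Once the outputs of all classical boxes are known, the strategy measures
   the first box chosen by [T], then the second one with the input chosen by
   [F] or [G]. *)
Lemma adapt_boxes01 (C : pred O) : (forall a a', C a -> C a' -> agree_off boxes01 a a') ->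
  adapt g [set box0; box1] C.
Proof.
move=> C01; case: (pickP C) => [a0 Ca0|noC]; last by apply: adapt_unreachable => a; rewrite noC.
have mask01 a : C a -> mask Out_gt0 boxes01 a = mask Out_gt0 boxes01 a0.
  by move=> Ca; apply: mask_eq; exact: C01.
have only1 (k : 'I_n.+2) : boxes01 k && (k != box0) -> pred1 box1 k by case/andP=> /orP [->|].
have only0 (k : 'I_n.+2) : boxes01 k && (k != box1) -> pred1 box0 k by case/andP=> /orP [|->].
case E : (T (mask Out_gt0 boxes01 a0)) => [z|z].
- apply: (@adapt_step _ _ _ g _ C box0 (z box0)); first by rewrite !inE eqxx.
    by move=> a Ca; rewrite /strategy_inputs (mask01 a Ca) E ffunE.
  move=> ai; rewrite setU1K ?inE //.
  case: (pickP (fun a => C a && (a box0 == ai))) => [a1 /andP [Ca1 /eqP a1i]|noC];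
    last by apply: adapt_unreachable => a; rewrite noC.
  apply: (@adapt_step _ _ _ g _ _ box1 (F (mask Out_gt0 (pred1 box1) a1) z box1)).
  + by rewrite inE.
  + move=> a /andP [Ca /eqP ai_a]; rewrite /strategy_inputs (mask01 a Ca) E ffunE /=.
    by rewrite (mask_eq _ (agree_off_sub only1 (agree_off_fix (C01 _ _ Ca Ca1) ai_a a1i))).
  + by move=> ai'; rewrite setDv; exact: adapt_done.
- apply: (@adapt_step _ _ _ g _ C box1 (z box1)); first by rewrite !inE eqxx orbT.
    by move=> a Ca; rewrite /strategy_inputs (mask01 a Ca) E ffunE.
  move=> ai; rewrite setUC setU1K ?inE //.
  case: (pickP (fun a => C a && (a box1 == ai))) => [a1 /andP [Ca1 /eqP a1i]|noC];
    last by apply: adapt_unreachable => a; rewrite noC.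
  apply: (@adapt_step _ _ _ g _ _ box0 (G (mask Out_gt0 (pred1 box0) a1) z box0)).
  + by rewrite inE.
  + move=> a /andP [Ca /eqP ai_a]; rewrite /strategy_inputs (mask01 a Ca) E ffunE /=.
    by rewrite (mask_eq _ (agree_off_sub only0 (agree_off_fix (C01 _ _ Ca Ca1) ai_a a1i))).
  + by move=> ai'; rewrite setDv; exact: adapt_done.
Qed.

(* The classical boxes are measured first, in any order, with their only input. *)
Lemma adapt_classical_first k (S : {set 'I_n.+2}) (C : pred O) : #|S| = k.+2 ->
  [set box0; box1] \subset S ->
  (forall a a', C a -> C a' -> agree_off [pred j in S] a a') -> adapt g S C.
Proof.
elim: k S C => [|k IH] S C cardS sub01 CS.
  have S01 : [set box0; box1] = S by apply/eqP; rewrite eqEcard sub01 cardS cards2.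
  rewrite -S01; apply: adapt_boxes01 => a a' Ca Ca'.
  by apply: agree_off_sub (CS a a' Ca Ca') => j; rewrite /= -S01 !inE.
have [i iS i01] : exists2 i, i \in S & i \notin [set box0; box1].
  apply/subsetPn; apply: contraTN isT => /subset_leq_card.
  by rewrite cardS cards2.
have i2 : (2 <= i)%N.
  move: i01; rewrite !inE negb_or => /andP [i0 i1].
  by move: i0 i1; rewrite -!val_eqE /=; case: (val i) => [|[|j]].
apply: (@adapt_step _ _ _ g S C i (ref_input Inp_gt0 i) iS).
  have /card_le1_eqP single : (#|Inp i| <= 1)%N by rewrite classical_boxes.
  by move=> a _; apply: single.
move=> ai; apply: IH.
- by move: cardS; rewrite (cardsD1 i) iS => -[].
- by rewrite subsetD1 sub01 i01.
- move=> a a' /andP [Ca /eqP ai_a] /andP [Ca' /eqP ai_a'].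
  by apply: agree_off_sub (agree_off_fix (CS a a' Ca Ca') ai_a ai_a') => j; rewrite !inE andbC.
Qed.

Lemma strategy_inputs_adapt : adapt g [set: 'I_n.+2] predT.
Proof.
apply: (@adapt_classical_first n).
- by rewrite cardsT card_ord.
- exact: subsetT.
- by move=> a a' _ _; apply/forallP => j; rewrite /= inE.
Qed.

End Adaptive.

Lemma strategy_meas_basic (R : realType) n (Inp Out : 'I_n.+2 -> finType)
    (Inp_gt0 : forall i, (0 < #|Inp i|)%N) (Out_gt0 : forall i, (0 < #|Out i|)%N)
    (classical_boxes : forall i : 'I_n.+2, (2 <= i)%N -> #|Inp i| = 1%N)
    (Rt : finType) (j : strategy Inp Out Rt) :
  is_basic (strategy_meas (R := R) Out_gt0 j).
Proof.
exists (strategy_inputs_of Out_gt0 j), (fun a => j.2 a (strategy_inputs_of Out_gt0 j a)).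
by split=> //; apply: strategy_inputs_adapt.
Qed.

Lemma measurement_mixture_of_basic (R : realType) (n : nat) (Inp Out : 'I_n.+2 -> finType)
    (Inp_gt0 : forall i, (0 < #|Inp i|)%N) (Out_gt0 : forall i, (0 < #|Out i|)%N)
    (classical_boxes : forall i : 'I_n.+2, (2 <= i)%N -> #|Inp i| = 1%N)
    (Rt : finType) (M : Rt -> table R Inp Out -> R) :
  is_measurement M -> is_mixture_of_basic M.
Proof.
move=> M_meas; have [Rv [Rv_ge0 RvE]] := measurement_nonneg_reps Inp_gt0 M_meas.
pose c a x := \sum_r Rv r a x.
have c_ge0 a x : 0 <= c a x by apply: sumr_ge0.
have c_one p : is_state p -> \sum_a \sum_x p a x * c a x = 1.
  move=> ps; rewrite -(M_meas.2 p ps) (eq_bigr _ (fun r _ => RvE r p ps)).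
  rewrite [RHS]exchange_big; apply: eq_bigr => a _; rewrite [RHS]exchange_big.
  by apply: eq_bigr => x _; rewrite mulr_sumr.
have c_norm := unit_effect_row_sum1 c_one.
have /card_gt0P [r0 _] := measurement_outcomes_gt0 Out_gt0 M_meas.
have [y cE] := unit_effect_rep Inp_gt0 Out_gt0 c_one.
have [w01 [w10 c_split]] := sequential_split_exists classical_boxes c_ge0 cE.
exists (strategy Inp Out Rt), (strategy_weight Inp_gt0 c w01 w10 Rv r0), (strategy_meas (Rt := Rt) Out_gt0).
split.
- exact: strategy_weight_ge0.
- exact: strategy_weight_sum1.
- exact: strategy_meas_basic.
- by move=> r p ps; rewrite RvE // (strategy_mixture _ _ r0 c_split c_norm).
Qed.

Unset Implicit Arguments.
Set Strict Implicit.
Set Printing Implicit Defensive.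

Theorem lemma2 (R : realType) (n : nat) (Inp Out : 'I_n.+2 -> finType)
  (hInp : forall i, (0 < #|Inp i|)%N)
  (hOut : forall i, (0 < #|Out i|)%N)
  (hclassical : forall i : 'I_n.+2, (2 <= i)%N -> #|Inp i| = 1%N)
  (Rt : finType) (M : Rt -> table R Inp Out -> R)
  (hM : is_measurement M) :
  is_basic M \/ is_mixture_of_basic M.
Proof. by right; apply: measurement_mixture_of_basic. Qed.
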